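(* Let $q\in\mathbb C$ with $|q|=1$, $q^2\neq1$, and let $A,B$ be self-adjoint operators on a Hilbert space $\mathcal H$. Suppose $\mu,\mu q,\mu q^2\in\rho(B)$, $R_\mu(B)A\subseteq qAR_{\mu q}(B)$ and $R_{\mu q}(B)A\subseteq qAR_{\mu q^2}(B)$. Then $\mathcal D_{q^2}(A^2,B)$ is a core for $B$.
   Context: $\rho(T)$ denotes the resolvent set and $R_\lambda(T)=(T-\lambda I)^{-1}$ the resolvent of a closed operator $T$; $S\subseteq T$ means $T$ extends $S$; products of unbounded operators have their natural domains. For self-adjoint $X,Y$ and a complex number $p$, $\mathcal D_p(X,Y):=\{f\in\mathcal D(YX)\cap\mathcal D(XY): XYf=pYXf\}$; thus $\mathcal D_{q^2}(A^2,B)=\{f\in\mathcal D(BA^2)\cap\mathcal D(A^2B): A^2Bf=q^2BA^2f\}$. *)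

From Stdlib Require Import Reals.
Set Implicit Arguments.
Open Scope R_scope.

Record Cplx := mkC { Re : R ; Im : R }.
Definition Czero : Cplx := mkC 0 0.
Definition Cone : Cplx := mkC 1 0.
Definition Cadd (a b : Cplx) : Cplx := mkC (Re a + Re b) (Im a + Im b).
Definition Copp (a : Cplx) : Cplx := mkC (- Re a) (- Im a).
Definition Cmul (a b : Cplx) : Cplx :=
  mkC (Re a * Re b - Im a * Im b) (Re a * Im b + Im a * Re b).
Definition Cconj (a : Cplx) : Cplx := mkC (Re a) (- Im a).
Definition Cabs (a : Cplx) : R := sqrt (Re a * Re a + Im a * Im a).

(* ---------- Complex Hilbert spaces ----------
   inner product linear in the first argument, conjugate-linear in the second *)
Record Hilbert := {
  hcar :> Type;
  hzero : hcar;
  hadd : hcar -> hcar -> hcar;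
  hopp : hcar -> hcar;
  hscal : Cplx -> hcar -> hcar;
  inner : hcar -> hcar -> Cplx;
  hadd_assoc : forall x y z, hadd x (hadd y z) = hadd (hadd x y) z;
  hadd_comm : forall x y, hadd x y = hadd y x;
  hadd_0 : forall x, hadd x hzero = x;
  hadd_opp : forall x, hadd x (hopp x) = hzero;
  hscal_assoc : forall a b x, hscal a (hscal b x) = hscal (Cmul a b) x;
  hscal_1 : forall x, hscal Cone x = x;
  hscal_addv : forall a x y, hscal a (hadd x y) = hadd (hscal a x) (hscal a y);
  hscal_adds : forall a b x, hscal (Cadd a b) x = hadd (hscal a x) (hscal b x);
  inner_add : forall x y z, inner (hadd x y) z = Cadd (inner x z) (inner y z);
  inner_scal : forall a x y, inner (hscal a x) y = Cmul a (inner x y);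
  inner_conj : forall x y, inner y x = Cconj (inner x y);
  inner_pos : forall x, 0 <= Re (inner x x);
  inner_def : forall x, inner x x = Czero -> x = hzero;
  hcomplete : forall u : nat -> hcar,
    (forall eps, 0 < eps -> exists N, forall m n, (N <= m)%nat -> (N <= n)%nat ->
       sqrt (Re (inner (hadd (u m) (hopp (u n))) (hadd (u m) (hopp (u n))))) < eps) ->
    exists l, forall eps, 0 < eps -> exists N, forall n, (N <= n)%nat ->
       sqrt (Re (inner (hadd (u n) (hopp l)) (hadd (u n) (hopp l)))) < eps
}.

Arguments hzero {h} : rename.
Arguments hadd {h} : rename.
Arguments hopp {h} : rename.
Arguments hscal {h} : rename.
Arguments inner {h} : rename.

Section Ops.
Variable H : Hilbert.

Definition hsub (x y : H) : H := hadd x (hopp y).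
Definition hnorm (x : H) : R := sqrt (Re (inner x x)).

Definition converges (u : nat -> H) (l : H) : Prop :=
  forall eps, 0 < eps -> exists N, forall n, (N <= n)%nat -> hnorm (hsub (u n) l) < eps.

Record Op := mkOp { dom : H -> Prop ; app : H -> H }.

Definition is_linear (T : Op) : Prop :=
  dom T hzero /\
  (forall x y, dom T x -> dom T y -> dom T (hadd x y) /\
       app T (hadd x y) = hadd (app T x) (app T y)) /\
  (forall a x, dom T x -> dom T (hscal a x) /\ app T (hscal a x) = hscal a (app T x)).

Definition op_incl (S T : Op) : Prop :=
  forall x, dom S x -> dom T x /\ app T x = app S x.

Definition op_comp (S T : Op) : Op :=
  mkOp (fun x => dom T x /\ dom S (app T x)) (fun x => app S (app T x)).

Definition op_scale (c : Cplx) (T : Op) : Op :=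
  mkOp (dom T) (fun x => hscal c (app T x)).

Definition op_total (f : H -> H) : Op := mkOp (fun _ => True) f.

Definition dense (D : H -> Prop) : Prop :=
  forall x, exists u : nat -> H, (forall n, D (u n)) /\ converges u x.

(* self-adjoint: densely defined linear operator with T = T^* *)
Definition self_adjoint (T : Op) : Prop :=
  is_linear T /\ dense (dom T) /\
  (forall g, dom T g <->
     exists h, forall f, dom T f -> inner (app T f) g = inner f h) /\
  (forall f g, dom T f -> dom T g -> inner (app T f) g = inner f (app T g)).

Definition closed_op (T : Op) : Prop :=
  forall (u : nat -> H) x y, (forall n, dom T (u n)) -> converges u x ->
    converges (fun n => app T (u n)) y -> dom T x /\ app T x = y.

Definition bounded_fun (R0 : H -> H) : Prop :=
  exists M, forall x, hnorm (R0 x) <= M * hnorm x.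

(* Rl is the resolvent (T - lam I)^{-1}: a bounded everywhere-defined
   two-sided inverse of T - lam I : dom T -> H. *)
Definition is_resolvent (T : Op) (lam : Cplx) (Rl : H -> H) : Prop :=
  bounded_fun Rl /\
  (forall g, dom T (Rl g) /\ hsub (app T (Rl g)) (hscal lam (Rl g)) = g) /\
  (forall f, dom T f -> Rl (hsub (app T f) (hscal lam f)) = f).

Definition in_resolvent_set (T : Op) (lam : Cplx) : Prop :=
  closed_op T /\ exists Rl, is_resolvent T lam Rl.

Definition Dp (p : Cplx) (X Y : Op) : H -> Prop :=
  fun f => dom (op_comp Y X) f /\ dom (op_comp X Y) f /\
           app (op_comp X Y) f = hscal p (app (op_comp Y X) f).

(* D is a core for T: D ⊆ dom T and the closure of T|_D is T,
   i.e. D is dense in dom T for the graph norm *)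
Definition is_core (D : H -> Prop) (T : Op) : Prop :=
  (forall f, D f -> dom T f) /\
  forall f, dom T f -> exists u : nat -> H, (forall n, D (u n)) /\
     converges u f /\ converges (fun n => app T (u n)) (app T f).

End Ops.

Arguments hsub {H}. Arguments hnorm {H}. Arguments converges {H}.
Arguments dom {H}. Arguments app {H}. Arguments mkOp {H}.
Arguments is_linear {H}. Arguments op_incl {H}. Arguments op_comp {H}.
Arguments op_scale {H}. Arguments op_total {H}. Arguments dense {H}.
Arguments self_adjoint {H}. Arguments closed_op {H}. Arguments bounded_fun {H}.
Arguments is_resolvent {H}. Arguments in_resolvent_set {H}. Arguments Dp {H}.
Arguments is_core {H}.

(* Put λ = μq².  Three facts combine:
   (1) commutation: for h ∈ D(A²), f = R_λ h lies in D_{q²}(A², B), since the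
       inclusions give A² f = q̄² R_μ A² h ∈ D(B) and, from B f = h + λ f,
       A² B f = A² h + λ A² f = q² B A² f  (lemma resolvent_maps_into_Dp);
   (2) density: D(A²) is dense for self-adjoint A, because A + ic is onto for
       c > 0 and y = (A + ic)⁻¹(icx) ∈ D(A²) satisfies c|y - x| ≤ |Ax| for
       x ∈ D(A)  (lemma dom_sq_dense);
   (3) core criterion: a resolvent maps a dense set onto a core, since R_λ is
       continuous and B R_λ g = g + λ R_λ g  (lemma resolvent_image_core). *)

From Stdlib Require Import Reals Lra Psatz Lia Classical ClassicalEpsilon.
Open Scope R_scope.

Arguments hadd_assoc {h}. Arguments hadd_comm {h}. Arguments hadd_0 {h}.
Arguments hadd_opp {h}. Arguments hscal_assoc {h}. Arguments hscal_1 {h}.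
Arguments hscal_adds {h}. Arguments inner_add {h}.
Arguments inner_scal {h}. Arguments inner_conj {h}. Arguments inner_pos {h}.
Arguments inner_def {h}. Arguments hcomplete {h}.

Lemma Ceq (a b : Cplx) : Re a = Re b -> Im a = Im b -> a = b.
Proof. destruct a, b; simpl; intros; subst; reflexivity. Qed.

(** The squared norm [sqnorm x = <x,x>], which avoids square roots in
    algebraic identities. *)
Definition sqnorm {H : Hilbert} (x : H) : R := Re (inner x x).

Section VectorAlgebra.
Context {H : Hilbert}.
Implicit Types x y z : H.

Lemma hadd_cancel_l x y z : hadd x y = hadd x z -> y = z.
Proof.
  intro E.
  assert (E2 : hadd (hopp x) (hadd x y) = hadd (hopp x) (hadd x z)) by now rewrite E.
  rewrite !hadd_assoc, (hadd_comm (hopp x) x), hadd_opp in E2.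
  now rewrite !(hadd_comm hzero), !hadd_0 in E2.
Qed.

Lemma hscal_0 x : hscal Czero x = hzero.
Proof.
  apply (hadd_cancel_l (hscal Czero x)). rewrite hadd_0, <- hscal_adds.
  f_equal. apply Ceq; simpl; ring.
Qed.

(** Negation is scaling by [-1]; this lets every vector identity be reduced
    to scalar arithmetic. *)
Lemma hopp_scal x : hopp x = hscal (mkC (-1) 0) x.
Proof.
  apply (hadd_cancel_l x). rewrite hadd_opp, <- (hscal_1 x) at 1.
  rewrite <- hscal_adds, <- (hscal_0 x). f_equal. apply Ceq; simpl; ring.
Qed.

Lemma inner_0l y : inner hzero y = Czero.
Proof. rewrite <- (hscal_0 hzero), inner_scal. apply Ceq; simpl; ring. Qed.

Lemma inner_0r y : inner y hzero = Czero.
Proof. rewrite inner_conj, inner_0l. apply Ceq; simpl; ring. Qed.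

Lemma inner_add_r x y z : inner x (hadd y z) = Cadd (inner x y) (inner x z).
Proof.
  rewrite inner_conj, inner_add, (inner_conj x y), (inner_conj x z).
  apply Ceq; simpl; ring.
Qed.

Lemma inner_scal_r a x y : inner x (hscal a y) = Cmul (Cconj a) (inner x y).
Proof. rewrite inner_conj, inner_scal, (inner_conj x y). apply Ceq; simpl; ring. Qed.

Lemma inner_opp_l x y : inner (hopp x) y = Copp (inner x y).
Proof. rewrite hopp_scal, inner_scal. apply Ceq; simpl; ring. Qed.

Lemma inner_opp_r x y : inner x (hopp y) = Copp (inner x y).
Proof. rewrite hopp_scal, inner_scal_r. apply Ceq; simpl; ring. Qed.

Lemma Im_inner_self x : Im (inner x x) = 0.
Proof. pose proof (f_equal Im (inner_conj x x)) as E. simpl in E. lra. Qed.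

Lemma sqnorm_nonneg x : 0 <= sqnorm x.
Proof. apply inner_pos. Qed.

Lemma sqnorm_eq0 x : sqnorm x = 0 -> x = hzero.
Proof. intro E. apply inner_def, Ceq; [exact E | apply Im_inner_self]. Qed.

Lemma sqnorm_0 : sqnorm (@hzero H) = 0.
Proof. unfold sqnorm. now rewrite inner_0l. Qed.

Lemma eq_of_sqnorm_sub x y : sqnorm (hsub x y) = 0 -> x = y.
Proof.
  intro E. apply sqnorm_eq0 in E. apply (hadd_cancel_l (hopp y)).
  rewrite (hadd_comm (hopp y) y), hadd_opp, hadd_comm. exact E.
Qed.

End VectorAlgebra.

Ltac inner_expand :=
  unfold sqnorm, hsub in *;
  repeat rewrite ?inner_add, ?inner_add_r, ?inner_scal, ?inner_scal_r,
                 ?inner_opp_l, ?inner_opp_r, ?inner_0l, ?inner_0r;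
  cbn [Re Im Cadd Cmul Copp Cconj Czero Cone] in *.

(** Prove an identity between linear combinations of vectors, with arbitrary
    symbolic scalars, by expanding the squared norm of the difference. *)
Ltac vec_eq := apply eq_of_sqnorm_sub; inner_expand; field.

Section Norms.
Context {H : Hilbert}.
Implicit Types a b x y : H.

Lemma sqnorm_add a b : sqnorm (hadd a b) = sqnorm a + sqnorm b + 2 * Re (inner a b).
Proof. inner_expand. rewrite (inner_conj b a). simpl. ring. Qed.

Lemma sqnorm_scal c x : sqnorm (hscal c x) = (Re c * Re c + Im c * Im c) * sqnorm x.
Proof. inner_expand. rewrite Im_inner_self. ring. Qed.

Lemma sqnorm_sub_sym a b : sqnorm (hsub a b) = sqnorm (hsub b a).
Proof. inner_expand. ring. Qed.

Lemma hnorm_nonneg x : 0 <= hnorm x.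
Proof. apply sqrt_pos. Qed.

Lemma hnorm_sq x : hnorm x * hnorm x = sqnorm x.
Proof. apply sqrt_sqrt, sqnorm_nonneg. Qed.

Lemma hnorm_0 : hnorm (@hzero H) = 0.
Proof. unfold hnorm. rewrite inner_0l. apply sqrt_0. Qed.

Lemma hnorm_sub_sym a b : hnorm (hsub a b) = hnorm (hsub b a).
Proof. unfold hnorm. f_equal. apply sqnorm_sub_sym. Qed.

Lemma hnorm_scal c x : hnorm (hscal c x) = Cabs c * hnorm x.
Proof.
  unfold hnorm. fold (sqnorm (hscal c x)) (sqnorm x).
  rewrite sqnorm_scal, sqrt_mult; [reflexivity | nra | apply sqnorm_nonneg].
Qed.

Lemma hnorm_le_of_sqnorm x y r : 0 <= r -> r * r * sqnorm x <= sqnorm y -> r * hnorm x <= hnorm y.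
Proof.
  rewrite <- !hnorm_sq. pose proof (hnorm_nonneg x). pose proof (hnorm_nonneg y). nra.
Qed.

Lemma hnorm_lt_of_sqnorm x e : 0 < e -> sqnorm x < e * e -> hnorm x < e.
Proof. rewrite <- hnorm_sq. pose proof (hnorm_nonneg x). nra. Qed.

Lemma cauchy_schwarz_re a b : Rabs (Re (inner a b)) <= hnorm a * hnorm b.
Proof.
  assert (Quad : forall t, 0 <= sqnorm a + 2 * t * Re (inner a b) + t * t * sqnorm b).
  { intro t. pose proof (sqnorm_nonneg (hadd a (hscal (mkC t 0) b))) as P.
    rewrite sqnorm_add, sqnorm_scal, inner_scal_r in P. simpl in P. nra. }
  assert (Sq : Re (inner a b) * Re (inner a b) <= sqnorm a * sqnorm b).
  { pose proof (sqnorm_nonneg a). pose proof (sqnorm_nonneg b).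
    destruct (Req_dec (sqnorm b) 0) as [E|E].
    - apply sqnorm_eq0 in E. subst b. rewrite inner_0r. simpl. nra.
    - specialize (Quad (- Re (inner a b) / sqnorm b)).
      assert (0 <= sqnorm b * (sqnorm a + 2 * (- Re (inner a b) / sqnorm b) * Re (inner a b)
         + - Re (inner a b) / sqnorm b * (- Re (inner a b) / sqnorm b) * sqnorm b)) as K by nra.
      field_simplify in K; lra. }
  rewrite <- !hnorm_sq in Sq.
  rewrite <- (Rabs_pos_eq (hnorm a * hnorm b))
    by (apply Rmult_le_pos; apply hnorm_nonneg).
  apply Rsqr_le_abs_0. unfold Rsqr. nra.
Qed.

Lemma hnorm_triangle a b : hnorm (hadd a b) <= hnorm a + hnorm b.
Proof.
  pose proof (cauchy_schwarz_re a b) as CS. pose proof (Rle_abs (Re (inner a b))).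
  pose proof (hnorm_nonneg a). pose proof (hnorm_nonneg b). pose proof (hnorm_nonneg (hadd a b)).
  pose proof (hnorm_sq (hadd a b)) as S. rewrite sqnorm_add, <- !hnorm_sq in S. nra.
Qed.

Lemma hsub_triangle a b c : hnorm (hsub a c) <= hnorm (hsub a b) + hnorm (hsub b c).
Proof.
  replace (hsub a c) with (hadd (hsub a b) (hsub b c)) by vec_eq. apply hnorm_triangle.
Qed.

End Norms.

Lemma inv_succ_pos (n : nat) : 0 < / (INR n + 1).
Proof. apply Rinv_0_lt_compat. pose proof (pos_INR n). lra. Qed.

Lemma inv_succ_le1 (n : nat) : / (INR n + 1) <= 1.
Proof.
  rewrite <- Rinv_1. apply Rinv_le_contravar; [lra|]. pose proof (pos_INR n). lra.
Qed.

Lemma inv_succ_eventually_small delta : 0 < delta ->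
  exists N, forall n, (N <= n)%nat -> / (INR n + 1) < delta.
Proof.
  intro Hd. destruct (archimed_cor1 delta Hd) as [N [HN HN0]]. exists N. intros n Hn.
  apply Rle_lt_trans with (/ INR N); [|exact HN].
  apply Rinv_le_contravar; [apply lt_0_INR; lia|]. apply le_INR in Hn. lra.
Qed.

Definition cauchy {H : Hilbert} (u : nat -> H) : Prop :=
  forall eps, 0 < eps -> exists N, forall m n, (N <= m)%nat -> (N <= n)%nat ->
    hnorm (hsub (u m) (u n)) < eps.

Section Convergence.
Context {H : Hilbert}.
Implicit Types (u v : nat -> H) (x y : H).

Lemma cauchy_converges u : cauchy u -> exists l, converges u l.
Proof. exact (hcomplete u). Qed.

Lemma converges_cauchy u x : converges u x -> cauchy u.
Proof.
  intros C eps He. destruct (C (eps / 2)) as [N HN]; [lra|]. exists N. intros m n Hm Hn.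
  pose proof (hsub_triangle (u m) x (u n)). pose proof (HN m Hm). pose proof (HN n Hn).
  rewrite (hnorm_sub_sym x) in *. lra.
Qed.

Lemma converges_ext u v x : (forall n, u n = v n) -> converges u x -> converges v x.
Proof.
  intros E C eps He. destruct (C eps He) as [N HN]. exists N. intros n Hn. rewrite <- E. auto.
Qed.

Lemma converges_const x : converges (fun _ => x) x.
Proof.
  intros eps He. exists 0%nat. intros n _.
  replace (hsub x x) with (@hzero H) by vec_eq. now rewrite hnorm_0.
Qed.

Lemma converges_add u v x y : converges u x -> converges v y ->
  converges (fun n => hadd (u n) (v n)) (hadd x y).
Proof.
  intros Cu Cv eps He.
  destruct (Cu (eps / 2)) as [N1 H1]; [lra|]. destruct (Cv (eps / 2)) as [N2 H2]; [lra|].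
  exists (max N1 N2). intros n Hn.
  replace (hsub (hadd (u n) (v n)) (hadd x y)) with (hadd (hsub (u n) x) (hsub (v n) y))
    by vec_eq.
  pose proof (hnorm_triangle (hsub (u n) x) (hsub (v n) y)).
  specialize (H1 n ltac:(lia)). specialize (H2 n ltac:(lia)). lra.
Qed.

Lemma limit_unique u x y : converges u x -> converges u y -> x = y.
Proof.
  intros Cx Cy. apply eq_of_sqnorm_sub. rewrite <- hnorm_sq.
  enough (hnorm (hsub x y) = 0) as -> by ring.
  apply Rle_antisym; [| apply hnorm_nonneg]. apply le_epsilon. intros eps He.
  destruct (Cx (eps / 2)) as [N1 H1]; [lra|]. destruct (Cy (eps / 2)) as [N2 H2]; [lra|].
  specialize (H1 (max N1 N2) ltac:(lia)). specialize (H2 (max N1 N2) ltac:(lia)).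
  pose proof (hsub_triangle x (u (max N1 N2)) y). rewrite hnorm_sub_sym in H1. lra.
Qed.

Lemma converges_dominated u v x y K :
  (forall n, hnorm (hsub (v n) y) <= K * hnorm (hsub (u n) x)) ->
  converges u x -> converges v y.
Proof.
  intros Dom Cu eps He. pose proof (Rabs_pos K). pose proof (Rle_abs K).
  destruct (Cu (eps / (Rabs K + 1))) as [N HN]; [apply Rdiv_lt_0_compat; lra|].
  exists N. intros n Hn. specialize (HN n Hn). specialize (Dom n).
  pose proof (hnorm_nonneg (hsub (u n) x)).
  apply Rmult_lt_compat_l with (r := Rabs K + 1) in HN; [|lra].
  replace ((Rabs K + 1) * (eps / (Rabs K + 1))) with eps in HN by (field; lra). nra.
Qed.

Lemma cauchy_dominated u v K :
  (forall m n, hnorm (hsub (v m) (v n)) <= K * hnorm (hsub (u m) (u n))) ->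
  cauchy u -> cauchy v.
Proof.
  intros Dom Cu eps He. pose proof (Rabs_pos K). pose proof (Rle_abs K).
  destruct (Cu (eps / (Rabs K + 1))) as [N HN]; [apply Rdiv_lt_0_compat; lra|].
  exists N. intros m n Hm Hn. specialize (HN m n Hm Hn). specialize (Dom m n).
  pose proof (hnorm_nonneg (hsub (u m) (u n))).
  apply Rmult_lt_compat_l with (r := Rabs K + 1) in HN; [|lra].
  replace ((Rabs K + 1) * (eps / (Rabs K + 1))) with eps in HN by (field; lra). nra.
Qed.

Lemma converges_scal u x c : converges u x -> converges (fun n => hscal c (u n)) (hscal c x).
Proof.
  apply converges_dominated with (K := Cabs c). intro n.
  replace (hsub (hscal c (u n)) (hscal c x)) with (hscal c (hsub (u n) x)) by vec_eq.
  rewrite hnorm_scal. lra.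
Qed.

Lemma converges_of_rate u x : (forall n, hnorm (hsub (u n) x) < / (INR n + 1)) -> converges u x.
Proof.
  intros Rate eps He. destruct (inv_succ_eventually_small eps He) as [N HN].
  exists N. intros n Hn. specialize (Rate n). specialize (HN n Hn). lra.
Qed.

Lemma re_inner_limit u x a : converges u x ->
  forall e, 0 < e -> exists N, forall n, (N <= n)%nat ->
    Rabs (Re (inner (u n) a) - Re (inner x a)) < e.
Proof.
  intros C e He. pose proof (hnorm_nonneg a).
  destruct (C (e / (hnorm a + 1))) as [N HN]; [apply Rdiv_lt_0_compat; lra|].
  exists N. intros n Hn. specialize (HN n Hn).
  replace (Re (inner (u n) a) - Re (inner x a)) with (Re (inner (hsub (u n) x) a))
    by (inner_expand; ring).
  eapply Rle_lt_trans; [apply cauchy_schwarz_re|].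
  pose proof (hnorm_nonneg (hsub (u n) x)).
  apply Rmult_lt_compat_l with (r := hnorm a + 1) in HN; [|lra].
  replace ((hnorm a + 1) * (e / (hnorm a + 1))) with e in HN by (field; lra). nra.
Qed.

Lemma re_inner_limit_eq u v x z a b : converges u x -> converges v z ->
  (forall n, Re (inner (u n) a) = Re (inner (v n) b)) -> Re (inner x a) = Re (inner z b).
Proof.
  intros Cu Cv E. apply Rle_antisym; apply le_epsilon; intros e He;
    destruct (re_inner_limit u x a Cu (e / 2)) as [N1 H1]; try lra;
    destruct (re_inner_limit v z b Cv (e / 2)) as [N2 H2]; try lra;
    specialize (H1 (max N1 N2) ltac:(lia)); specialize (H2 (max N1 N2) ltac:(lia));
    rewrite E in H1; apply Rabs_def2 in H1; apply Rabs_def2 in H2; lra.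
Qed.

Lemma inner_limit_eq u v x z a b : converges u x -> converges v z ->
  (forall n, inner (u n) a = inner (v n) b) -> inner x a = inner z b.
Proof.
  intros Cu Cv E. apply Ceq.
  - apply (re_inner_limit_eq u v); auto. intro n. now rewrite E.
  - set (i := mkC 0 1).
    assert (K : Re (inner (hscal i x) a) = Re (inner (hscal i z) b)).
    { apply (re_inner_limit_eq (fun n => hscal i (u n)) (fun n => hscal i (v n)));
        try apply converges_scal; auto.
      intro n. now rewrite !inner_scal, E. }
    rewrite !inner_scal in K. simpl in K. lra.
Qed.

Lemma dense_orthogonal_zero (D : H -> Prop) (w : H) :
  dense D -> (forall phi, D phi -> inner phi w = Czero) -> w = hzero.
Proof.
  intros Dd Orth. destruct (Dd w) as [u [Du Cu]]. apply inner_def.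
  rewrite <- (inner_0l w). apply (inner_limit_eq u (fun _ => hzero)); auto.
  - apply converges_const.
  - intro n. rewrite Orth, inner_0l; auto.
Qed.

End Convergence.

Lemma dense_of_approx {H : Hilbert} (D : H -> Prop) :
  (forall g eps, 0 < eps -> exists h, D h /\ hnorm (hsub h g) < eps) -> dense D.
Proof.
  intros Apx g.
  destruct (choice (fun n h => D h /\ hnorm (hsub h g) < / (INR n + 1))) as [h Hh].
  { intro n. apply Apx, inv_succ_pos. }
  exists h. split; [apply Hh|]. apply converges_of_rate. apply Hh.
Qed.

Section LinearOperators.
Context {H : Hilbert}.
Variable T : Op H.
Hypothesis LT : is_linear T.

Lemma lin_add x y : dom T x -> dom T y ->
  dom T (hadd x y) /\ app T (hadd x y) = hadd (app T x) (app T y).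
Proof. destruct LT as [_ [Ladd _]]. auto. Qed.

Lemma lin_scal a x : dom T x -> dom T (hscal a x) /\ app T (hscal a x) = hscal a (app T x).
Proof. destruct LT as [_ [_ Lscal]]. auto. Qed.

Lemma lin_sub x y : dom T x -> dom T y ->
  dom T (hsub x y) /\ app T (hsub x y) = hsub (app T x) (app T y).
Proof.
  intros Dx Dy. unfold hsub. rewrite !hopp_scal.
  destruct (lin_scal (mkC (-1) 0) y Dy) as [D1 E1].
  destruct (lin_add x _ Dx D1) as [D2 E2]. rewrite E2, E1. auto.
Qed.

Lemma lin_zero : dom T hzero /\ app T hzero = hzero.
Proof.
  destruct LT as [D0 _]. split; [exact D0|].
  destruct (lin_add hzero hzero D0 D0) as [_ E]. rewrite hadd_0 in E.
  apply (hadd_cancel_l (app T hzero)). rewrite hadd_0. symmetry; exact E.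
Qed.

End LinearOperators.

Section SelfAdjoint.
Context {H : Hilbert}.
Variable A : Op H.
Hypothesis SA : self_adjoint A.

Lemma sa_linear : is_linear A.
Proof. apply SA. Qed.

Lemma sa_symmetric f g : dom A f -> dom A g -> inner (app A f) g = inner f (app A g).
Proof. apply SA. Qed.

(** [D(A^* ) ⊆ D(A)]: a vector admitting an adjoint image lies in the domain. *)
Lemma sa_adjoint_dom g h : (forall f, dom A f -> inner (app A f) g = inner f h) -> dom A g.
Proof. intro K. apply SA. exists h. exact K. Qed.

Lemma Im_inner_app_self w : dom A w -> Im (inner (app A w) w) = 0.
Proof.
  intro Dw. pose proof (sa_symmetric w w Dw Dw) as E. rewrite E.
  rewrite (inner_conj w (app A w)) in E. apply (f_equal Im) in E. simpl in E. lra.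
Qed.

Lemma self_adjoint_closed : closed_op A.
Proof.
  intros u x y Du Cu Cy.
  assert (Adj : forall phi, dom A phi -> inner (app A phi) x = inner phi y).
  { intros phi Dphi. rewrite (inner_conj x), (inner_conj y phi). f_equal.
    apply (inner_limit_eq u (fun n => app A (u n))); auto.
    intro n. symmetry. apply sa_symmetric; auto. }
  assert (Dx : dom A x) by (apply (sa_adjoint_dom x y); exact Adj).
  split; [exact Dx|]. apply eq_of_sqnorm_sub.
  enough (hsub (app A x) y = hzero) as -> by apply sqnorm_0.
  apply (dense_orthogonal_zero (dom A)); [apply SA|].
  intros phi Dphi. unfold hsub. rewrite inner_add_r, inner_opp_r.
  rewrite <- sa_symmetric, Adj by auto. apply Ceq; simpl; ring.
Qed.

End SelfAdjoint.

Lemma quadratic_nonneg_linear_zero r a : 0 <= a -> (forall t, 0 <= -2 * t * r + t * t * a) -> r = 0.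
Proof.
  intros Ha K. specialize (K (r / (a + 1))).
  assert (K2 : 0 <= (a + 1) * (a + 1) * (-2 * (r / (a + 1)) * r + r / (a + 1) * (r / (a + 1)) * a))
    by (apply Rmult_le_pos; nra).
  replace ((a + 1) * (a + 1) * (-2 * (r / (a + 1)) * r + r / (a + 1) * (r / (a + 1)) * a))
    with (- (r * r) * (a + 2)) in K2 by (field; lra).
  nra.
Qed.

Lemma parallelogram {H : Hilbert} (g a b : H) :
  sqnorm (hsub a b) + 4 * sqnorm (hsub g (hscal (mkC (1/2) 0) (hadd a b)))
  = 2 * sqnorm (hsub g a) + 2 * sqnorm (hsub g b).
Proof. inner_expand. field. Qed.

Lemma sqnorm_sub_line {H : Hilbert} (g l m : H) t :
  sqnorm (hsub g (hadd l (hscal (mkC t 0) m))) =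
  sqnorm (hsub g l) - 2 * t * Re (inner (hsub g l) m) + t * t * sqnorm m.
Proof.
  replace (Re (inner (hsub g l) m))
    with ((Re (inner (hsub g l) m) + Re (inner m (hsub g l))) / 2)
    by (rewrite (inner_conj m); simpl; field).
  inner_expand. field.
Qed.

(** The point [m] is
    the limit of a minimizing sequence for the distance to [g]. *)
Section Projection.
Context {H : Hilbert}.
Variable M : H -> Prop.
Hypothesis M_zero : M hzero.
Hypothesis M_add : forall x y, M x -> M y -> M (hadd x y).
Hypothesis M_scal : forall a x, M x -> M (hscal a x).
Hypothesis M_closed : forall u z, (forall n, M (u n)) -> converges u z -> M z.
Variable g : H.

Lemma distance_infimum : exists d, 0 <= d /\ (forall m, M m -> d <= hnorm (hsub g m)) /\
  forall eps, 0 < eps -> exists m, M m /\ hnorm (hsub g m) < d + eps.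
Proof.
  set (E := fun r => exists m, M m /\ r = - hnorm (hsub g m)).
  assert (Upper0 : is_upper_bound E 0).
  { intros r [m [_ ->]]. pose proof (hnorm_nonneg (hsub g m)). lra. }
  destruct (completeness E) as [L [Ub Least]].
  - exists 0. exact Upper0.
  - exists (- hnorm (hsub g hzero)), hzero. auto.
  - exists (- L). split; [|split].
    + pose proof (Least 0 Upper0). lra.
    + intros m Mm. assert (Em : E (- hnorm (hsub g m))) by (exists m; auto).
      apply Ub in Em. lra.
    + intros eps He. apply NNPP. intro Far.
      enough (L <= L - eps) by lra.
      apply Least. intros r [m [Mm ->]].
      destruct (Rlt_or_le (hnorm (hsub g m)) (- L + eps)); [|lra].
      exfalso. apply Far. exists m. auto.
Qed.

(** By the parallelogram law, a minimizing sequence is Cauchy. *)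
Lemma minimizing_sequence_cauchy d (ms : nat -> H) : 0 <= d ->
  (forall m, M m -> d <= hnorm (hsub g m)) ->
  (forall n, M (ms n) /\ hnorm (hsub g (ms n)) < d + / (INR n + 1)) -> cauchy ms.
Proof.
  intros d0 Low Min eps He.
  destruct (inv_succ_eventually_small (eps * eps / (2 * (4 * d + 2)))) as [N HN].
  { apply Rdiv_lt_0_compat; nra. }
  exists N. intros m n Hm Hn. apply hnorm_lt_of_sqnorm; [exact He|].
  destruct (Min m) as [M1 L1]. destruct (Min n) as [M2 L2].
  pose proof (Low _ (M_scal (mkC (1/2) 0) _ (M_add _ _ M1 M2))) as Mid.
  pose proof (parallelogram g (ms m) (ms n)) as P. rewrite <- !hnorm_sq in P.
  specialize (HN m Hm) as Em. specialize (HN n Hn) as En.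
  pose proof (inv_succ_pos m). pose proof (inv_succ_pos n).
  pose proof (inv_succ_le1 m). pose proof (inv_succ_le1 n).
  pose proof (Low _ M1). pose proof (Low _ M2). rewrite hnorm_sq in P.
  set (em := / (INR m + 1)) in *. set (en := / (INR n + 1)) in *.
  assert (Bound : sqnorm (hsub (ms m) (ms n)) <= (4 * d + 2) * (em + en)) by nra.
  assert ((4 * d + 2) * (em + en) < eps * eps).
  { apply Rmult_lt_compat_l with (r := 4 * d + 2) in Em; [|lra].
    apply Rmult_lt_compat_l with (r := 4 * d + 2) in En; [|lra].
    replace ((4 * d + 2) * (eps * eps / (2 * (4 * d + 2)))) with (eps * eps / 2)
      in Em, En by (field; lra). lra. }
  lra.
Qed.

Lemma closest_point : exists l, M l /\ forall m, M m -> hnorm (hsub g l) <= hnorm (hsub g m).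
Proof.
  destruct distance_infimum as [d [d0 [Low Apx]]].
  destruct (choice (fun n m => M m /\ hnorm (hsub g m) < d + / (INR n + 1))) as [ms Min].
  { intro n. apply Apx, inv_succ_pos. }
  destruct (cauchy_converges ms (minimizing_sequence_cauchy d ms d0 Low Min)) as [l Cl].
  exists l. split; [apply (M_closed ms l); [apply Min | exact Cl]|].
  intros m Mm. apply Rle_trans with d; [|apply Low; exact Mm].
  apply le_epsilon. intros eps He.
  destruct (Cl (eps / 2)) as [N1 H1]; [lra|].
  destruct (inv_succ_eventually_small (eps / 2)) as [N2 H2]; [lra|].
  set (n := max N1 N2). specialize (H1 n ltac:(lia)). specialize (H2 n ltac:(lia)).
  pose proof (hsub_triangle g (ms n) l). pose proof (proj2 (Min n)). lra.
Qed.

(** The first-order condition at a closest point is orthogonality. *)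
Lemma closest_point_orthogonal l : M l ->
  (forall m, M m -> hnorm (hsub g l) <= hnorm (hsub g m)) ->
  forall m, M m -> inner (hsub g l) m = Czero.
Proof.
  intros Ml Closest.
  assert (Re0 : forall m, M m -> Re (inner (hsub g l) m) = 0).
  { intros m Mm. apply (quadratic_nonneg_linear_zero _ (sqnorm m)); [apply sqnorm_nonneg|].
    intro t. pose proof (Closest _ (M_add _ _ Ml (M_scal (mkC t 0) _ Mm))) as C.
    pose proof (hnorm_nonneg (hsub g l)).
    pose proof (hnorm_sq (hsub g l)) as S1.
    pose proof (hnorm_sq (hsub g (hadd l (hscal (mkC t 0) m)))) as S2.
    rewrite sqnorm_sub_line in S2. nra. }
  intros m Mm. apply Ceq; [apply Re0; exact Mm|].
  pose proof (Re0 _ (M_scal (mkC 0 1) _ Mm)) as Z.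
  rewrite inner_scal_r in Z. simpl in *. lra.
Qed.

Theorem projection : exists m, M m /\ forall m', M m' -> inner (hsub g m) m' = Czero.
Proof.
  destruct closest_point as [l [Ml Closest]].
  exists l. split; [exact Ml|]. apply closest_point_orthogonal; assumption.
Qed.

End Projection.

Definition add_ic {H : Hilbert} (A : Op H) (c : R) (y : H) : H :=
  hadd (app A y) (hscal (mkC 0 c) y).

(** For self-adjoint [A] and [c > 0], [A + ic : D(A) -> H] is surjective:
    its range is closed (by the graph-norm identity below and closedness of
    [A]) and has trivial orthogonal complement. *)
Section ShiftedSelfAdjoint.
Context {H : Hilbert}.
Variable A : Op H.
Hypothesis SA : self_adjoint A.
Variable c : R.
Hypothesis c_pos : 0 < c.

Lemma add_ic_sqnorm w : dom A w -> sqnorm (add_ic A c w) = sqnorm (app A w) + c * c * sqnorm w.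
Proof.
  intro Dw. unfold add_ic. rewrite sqnorm_add, sqnorm_scal, inner_scal_r. simpl.
  rewrite (Im_inner_app_self A SA w Dw). ring.
Qed.

Lemma add_ic_sub x y : dom A x -> dom A y ->
  dom A (hsub x y) /\ add_ic A c (hsub x y) = hsub (add_ic A c x) (add_ic A c y).
Proof.
  intros Dx Dy. destruct (lin_sub A (sa_linear A SA) x y Dx Dy) as [Ds Es].
  split; [exact Ds|]. unfold add_ic. rewrite Es. vec_eq.
Qed.

Lemma add_ic_range_closed (ys : nat -> H) z : (forall n, dom A (ys n)) ->
  converges (fun n => add_ic A c (ys n)) z -> exists y, dom A y /\ add_ic A c y = z.
Proof.
  intros Dys Cz. set (u := fun n => add_ic A c (ys n)).
  assert (Graph : forall m n, sqnorm (hsub (u m) (u n)) =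
      sqnorm (hsub (app A (ys m)) (app A (ys n))) + c * c * sqnorm (hsub (ys m) (ys n))).
  { intros m n. destruct (add_ic_sub _ _ (Dys m) (Dys n)) as [Ds Es].
    destruct (lin_sub A (sa_linear A SA) _ _ (Dys m) (Dys n)) as [_ EA].
    unfold u. rewrite <- Es, add_ic_sqnorm, EA by exact Ds. reflexivity. }
  assert (Cu : cauchy u) by exact (converges_cauchy u z Cz).
  destruct (cauchy_converges ys) as [y Cy].
  { apply (cauchy_dominated u ys (/ c)); [|exact Cu]. intros m n.
    apply Rmult_le_reg_l with c; [exact c_pos|].
    rewrite <- Rmult_assoc, Rinv_r, Rmult_1_l by lra.
    apply hnorm_le_of_sqnorm; [lra|].
    rewrite Graph. pose proof (sqnorm_nonneg (hsub (app A (ys m)) (app A (ys n)))). lra. }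
  destruct (cauchy_converges (fun n => app A (ys n))) as [w Cw].
  { apply (cauchy_dominated u _ 1); [|exact Cu]. intros m n.
    enough (1 * hnorm (hsub (app A (ys m)) (app A (ys n))) <= hnorm (hsub (u m) (u n))) by lra.
    apply hnorm_le_of_sqnorm; [lra|].
    rewrite Graph. pose proof (sqnorm_nonneg (hsub (ys m) (ys n))). nra. }
  destruct (self_adjoint_closed A SA ys y w Dys Cy Cw) as [Dy Ey].
  exists y. split; [exact Dy|]. apply (limit_unique u); [|exact Cz].
  unfold add_ic. rewrite Ey. apply converges_add; [exact Cw|]. apply converges_scal, Cy.
Qed.

(** A vector orthogonal to the range of [A + ic] lies in [D(A)] and has
    [<e, (A + ic) e> = <Ae, e> - ic |e|^2], whose imaginary part forces [e = 0]. *)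
Lemma add_ic_range_orthogonal e : (forall y, dom A y -> inner e (add_ic A c y) = Czero) -> e = hzero.
Proof.
  intro Orth.
  assert (De : dom A e).
  { apply (sa_adjoint_dom A SA e (hscal (mkC 0 c) e)). intros f Df.
    pose proof (f_equal Cconj (Orth f Df)) as O. rewrite <- inner_conj in O.
    unfold add_ic in O. rewrite inner_add, inner_scal in O. rewrite inner_scal_r.
    pose proof (f_equal Re O) as O1. pose proof (f_equal Im O) as O2. simpl in O1, O2.
    apply Ceq; simpl; lra. }
  pose proof (f_equal Im (Orth e De)) as O. unfold add_ic in O.
  rewrite inner_add_r, inner_scal_r, <- (sa_symmetric A SA e e De De) in O.
  simpl in O. rewrite (Im_inner_app_self A SA e De) in O.
  apply sqnorm_eq0. unfold sqnorm. apply Rmult_eq_reg_l with c; lra.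
Qed.

Lemma add_ic_surjective g : exists y, dom A y /\ add_ic A c y = g.
Proof.
  pose proof (sa_linear A SA) as LA.
  set (Range := fun z => exists y, dom A y /\ add_ic A c y = z).
  destruct (projection Range) with (g := g) as [m [[y [Dy Ey]] Orth]].
  - destruct (lin_zero A LA) as [D0 E0]. exists hzero. split; [exact D0|].
    unfold add_ic. rewrite E0. vec_eq.
  - intros x z [y1 [D1 <-]] [y2 [D2 <-]]. destruct (lin_add A LA y1 y2 D1 D2) as [D3 E3].
    exists (hadd y1 y2). split; [exact D3|]. unfold add_ic. rewrite E3. vec_eq.
  - intros a x [y1 [D1 <-]]. destruct (lin_scal A LA a y1 D1) as [D3 E3].
    exists (hscal a y1). split; [exact D3|]. unfold add_ic. rewrite E3. vec_eq.
  - intros u z Ru Cu. destruct (choice (fun n y => dom A y /\ add_ic A c y = u n) Ru) as [ys Hys].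
    apply (add_ic_range_closed ys); [apply Hys|].
    apply (converges_ext u); [|exact Cu]. intro n. symmetry. apply Hys.
  - exists y. split; [exact Dy|]. rewrite Ey. symmetry. apply eq_of_sqnorm_sub.
    rewrite (add_ic_range_orthogonal (hsub g m)); [apply sqnorm_0|].
    intros y' Dy'. apply Orth. exists y'. auto.
Qed.

(** Smoothing: [y = (A + ic)^{-1}(icx)] lies in [D(A^2)] when [x ∈ D(A)], since
    [Ay = ic(x - y)], and it is close to [x]: [c |y - x| <= |Ax|]. *)
Lemma smoothing x : dom A x ->
  exists y, dom (op_comp A A) y /\ c * hnorm (hsub y x) <= hnorm (app A x).
Proof.
  intro Dx. pose proof (sa_linear A SA) as LA.
  destruct (add_ic_surjective (hscal (mkC 0 c) x)) as [y [Dy Ty]].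
  assert (Ay : app A y = hscal (mkC 0 c) (hsub x y)).
  { transitivity (hsub (add_ic A c y) (hscal (mkC 0 c) y)); [unfold add_ic; vec_eq|].
    rewrite Ty. vec_eq. }
  destruct (lin_sub A LA x y Dx Dy) as [Dxy _].
  destruct (add_ic_sub y x Dy Dx) as [Dyx Eyx].
  exists y. split.
  - split; [exact Dy|]. rewrite Ay. apply (lin_scal A LA), Dxy.
  - apply hnorm_le_of_sqnorm; [lra|].
    assert (Tyx : add_ic A c (hsub y x) = hopp (app A x)).
    { rewrite Eyx, Ty. unfold add_ic. vec_eq. }
    pose proof (add_ic_sqnorm _ Dyx) as G. rewrite Tyx in G.
    replace (sqnorm (hopp (app A x))) with (sqnorm (app A x)) in G by (inner_expand; ring).
    pose proof (sqnorm_nonneg (app A (hsub y x))). lra.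
Qed.

End ShiftedSelfAdjoint.

(** The domain of [A^2] is dense for self-adjoint [A]: approximate first by
    an element of the dense domain [D(A)], then smooth it. *)
Lemma dom_sq_dense {H : Hilbert} (A : Op H) : self_adjoint A -> dense (dom (op_comp A A)).
Proof.
  intro SA. apply dense_of_approx. intros g eps He.
  destruct (proj1 (proj2 SA) g) as [u [Du Cu]].
  destruct (Cu (eps / 2)) as [N HN]; [lra|]. specialize (HN N (le_n N)).
  set (x := u N) in *. pose proof (hnorm_nonneg (app A x)).
  set (c := 2 * (hnorm (app A x) + 1) / eps).
  assert (c_pos : 0 < c) by (unfold c; apply Rdiv_lt_0_compat; lra).
  destruct (smoothing A SA c c_pos x (Du N)) as [y [Dy Close]].
  exists y. split; [exact Dy|].
  assert (hnorm (hsub y x) < eps / 2).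
  { apply Rmult_lt_reg_l with c; [exact c_pos|].
    replace (c * (eps / 2)) with (hnorm (app A x) + 1) by (unfold c; field; lra). lra. }
  pose proof (hsub_triangle y x g). lra.
Qed.

(** Resolvents are bounded linear maps, and the resolvent image of a dense set
    is a core: [R_λ] is continuous and [B R_λ g = g + λ R_λ g], so both
    [R_λ h_n] and [B R_λ h_n] converge when [h_n] does. *)
Section Resolvent.
Context {H : Hilbert}.
Variable B : Op H.
Hypothesis LB : is_linear B.
Variable lam : Cplx.
Variable Rl : H -> H.
Hypothesis Res : is_resolvent B lam Rl.

Lemma resolvent_range g : dom B (Rl g) /\ app B (Rl g) = hadd g (hscal lam (Rl g)).
Proof.
  destruct Res as [_ [Right _]]. destruct (Right g) as [D E]. split; [exact D|].
  rewrite <- E at 2. vec_eq.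
Qed.

Lemma resolvent_sub x y : Rl (hsub x y) = hsub (Rl x) (Rl y).
Proof.
  destruct Res as [_ [_ Left]].
  destruct (resolvent_range x) as [Dx Ex]. destruct (resolvent_range y) as [Dy Ey].
  destruct (lin_sub B LB _ _ Dx Dy) as [Ds Es].
  rewrite <- (Left _ Ds). f_equal. rewrite Es, Ex, Ey. vec_eq.
Qed.

Lemma resolvent_continuous u x : converges u x -> converges (fun n => Rl (u n)) (Rl x).
Proof.
  destruct Res as [[K Bnd] _]. apply converges_dominated with (K := K).
  intro n. rewrite <- resolvent_sub. apply Bnd.
Qed.

Lemma resolvent_image_core (D S : H -> Prop) : dense D ->
  (forall h, D h -> S (Rl h)) -> (forall f, S f -> dom B f) -> is_core S B.
Proof.
  intros Dd Image Sdom. split; [exact Sdom|]. intros f Df.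
  set (g := hsub (app B f) (hscal lam f)).
  destruct (Dd g) as [h [Dh Ch]].
  assert (Cf : converges (fun n => Rl (h n)) f).
  { destruct Res as [_ [_ Left]]. rewrite <- (Left f Df). apply resolvent_continuous, Ch. }
  exists (fun n => Rl (h n)). split; [intro n; apply Image, Dh|]. split; [exact Cf|].
  apply (converges_ext (fun n => hadd (h n) (hscal lam (Rl (h n))))).
  { intro n. symmetry. apply resolvent_range. }
  replace (app B f) with (hadd g (hscal lam f)) by (unfold g; vec_eq).
  apply converges_add; [exact Ch|]. apply converges_scal, Cf.
Qed.

End Resolvent.

Lemma unit_conj_mul q : Cabs q = 1 -> Cmul (Cconj q) q = Cone.
Proof.
  unfold Cabs. intro E.
  assert (Q : Re q * Re q + Im q * Im q = 1).
  { rewrite <- (sqrt_sqrt (Re q * Re q + Im q * Im q)), E by nra. ring. }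
  apply Ceq; simpl; lra.
Qed.

Lemma unit_sq_conj_sq q : Cabs q = 1 -> Cmul (Cmul q q) (Cmul (Cconj q) (Cconj q)) = Cone.
Proof.
  intro Hq. replace (Cmul (Cmul q q) (Cmul (Cconj q) (Cconj q)))
    with (Cmul (Cmul (Cconj q) q) (Cmul (Cconj q) q)) by (apply Ceq; simpl; ring).
  rewrite unit_conj_mul by exact Hq. apply Ceq; simpl; ring.
Qed.

Lemma hscal_cancel {H : Hilbert} a b (x : H) : Cmul a b = Cone -> hscal a (hscal b x) = x.
Proof. intro E. rewrite hscal_assoc, E. apply hscal_1. Qed.

(** For unimodular [q], the inclusion [R_a A ⊆ q A R_b] is the commutation
    rule [A R_b x = q̄ R_a A x] for [x ∈ D(A)]. *)
Lemma inclusion_commute {H : Hilbert} (A : Op H) (Ra Rb : H -> H) q x : Cabs q = 1 ->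
  op_incl (op_comp (op_total Ra) A) (op_scale q (op_comp A (op_total Rb))) -> dom A x ->
  dom A (Rb x) /\ app A (Rb x) = hscal (Cconj q) (Ra (app A x)).
Proof.
  intros Hq Incl Dx. destruct (Incl x (conj Dx I)) as [[_ D] E]. simpl in D, E.
  split; [exact D|]. rewrite <- E, hscal_cancel; [reflexivity | apply unit_conj_mul, Hq].
Qed.

(** For [f = R_λ h] the two commutation rules give [A^2 f = q̄^2 R_μ A^2 h ∈ D(B)],
    and [Bf = h + λf] gives [A^2 B f = A^2 h + λ A^2 f = q^2 B A^2 f]. *)
Lemma resolvent_maps_into_Dp {H : Hilbert} (A B : Op H) q mu (Rmu Rmuq Rmuq2 : H -> H) h :
  Cabs q = 1 -> is_linear A -> is_linear B ->
  is_resolvent B mu Rmu -> is_resolvent B (Cmul mu (Cmul q q)) Rmuq2 ->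
  op_incl (op_comp (op_total Rmu) A) (op_scale q (op_comp A (op_total Rmuq))) ->
  op_incl (op_comp (op_total Rmuq) A) (op_scale q (op_comp A (op_total Rmuq2))) ->
  dom (op_comp A A) h -> Dp (Cmul q q) (op_comp A A) B (Rmuq2 h).
Proof.
  intros Hq LA LB Res_mu Res_lam Incl1 Incl2 [Dh DAh].
  set (qb := Cconj q). set (lam := Cmul mu (Cmul q q)). set (f := Rmuq2 h).
  set (P := Rmu (app A (app A h))).
  destruct (inclusion_commute A Rmuq Rmuq2 q h Hq Incl2 Dh) as [Df Af].
  destruct (inclusion_commute A Rmu Rmuq q (app A h) Hq Incl1 DAh) as [DY AY].
  assert (DAf : dom A (app A f) /\ app A (app A f) = hscal (Cmul qb qb) P).
  { fold f qb in Af. rewrite Af. destruct (lin_scal A LA qb _ DY) as [D E].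
    rewrite E, AY, hscal_assoc. split; [exact D | reflexivity]. }
  destruct DAf as [DAf AAf].
  destruct (resolvent_range B mu Rmu Res_mu (app A (app A h))) as [DP BP]. fold P in DP, BP.
  destruct (lin_scal B LB (Cmul qb qb) P DP) as [DBAAf BAAf]. rewrite <- AAf in DBAAf, BAAf.
  destruct (resolvent_range B lam Rmuq2 Res_lam h) as [DBf Bf]. fold f in DBf, Bf.
  destruct (lin_scal A LA lam f Df) as [D1 E1].
  destruct (lin_add A LA h _ Dh D1) as [DABf ABf]. rewrite <- Bf in DABf, ABf.
  destruct (lin_scal A LA lam (app A f) DAf) as [D3 E3].
  rewrite E1 in ABf.
  destruct (lin_add A LA (app A h) _ DAh D3) as [DAABf AABf]. rewrite <- ABf in DAABf, AABf.
  split; [split; [split; assumption | exact DBAAf]|].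
  split; [split; [exact DBf | split; assumption]|]. simpl.
  assert (Unit : Cmul (Cmul q q) (Cmul qb qb) = Cone) by (apply unit_sq_conj_sq, Hq).
  rewrite AABf, E3, BAAf, BP, AAf, (hscal_cancel (Cmul q q) _ _ Unit).
  unfold lam. rewrite <- (hscal_assoc mu (Cmul q q)), (hscal_cancel (Cmul q q) _ _ Unit).
  reflexivity.
Qed.

Theorem mainTheorem6 (H : Hilbert) (q mu : Cplx) (A B : Op H)
  (Rmu Rmuq Rmuq2 : H -> H) :
  Cabs q = 1 ->
  Cmul q q <> Cone ->
  self_adjoint A ->
  self_adjoint B ->
  in_resolvent_set B mu ->
  in_resolvent_set B (Cmul mu q) ->
  in_resolvent_set B (Cmul mu (Cmul q q)) ->
  is_resolvent B mu Rmu ->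
  is_resolvent B (Cmul mu q) Rmuq ->
  is_resolvent B (Cmul mu (Cmul q q)) Rmuq2 ->
  op_incl (op_comp (op_total Rmu) A) (op_scale q (op_comp A (op_total Rmuq))) ->
  op_incl (op_comp (op_total Rmuq) A) (op_scale q (op_comp A (op_total Rmuq2))) ->
  is_core (Dp (Cmul q q) (op_comp A A) B) B.
Proof.
  intros Hq _ SA SB _ _ _ Res_mu _ Res_lam Incl1 Incl2.
  apply (resolvent_image_core B (sa_linear B SB) _ Rmuq2 Res_lam (dom (op_comp A A))).
  - exact (dom_sq_dense A SA).
  - intros h Dh. exact (resolvent_maps_into_Dp A B q mu Rmu Rmuq Rmuq2 h Hq
      (sa_linear A SA) (sa_linear B SB) Res_mu Res_lam Incl1 Incl2 Dh).
  - intros f [_ [[DBf _] _]]. exact DBf.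
Qed.
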